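(* There is $p_0$ such that the following holds for every prime $p>p_0$. Let $S\subseteq\mathbb{Z}_p$ with $p/3<|S|<2p/5$, and for $n\in\mathbb{Z}_p$ let $r(n)$ be the number of pairs $(s_1,s_2)\in S\times S$ with $s_1+s_2=n$. Then for every nonempty $T\subseteq\mathbb{Z}_p$, $$\sum_{n\in T} r(n)<0.93\,|S|\,(|S|\,|T|)^{1/2}.$$ *)

From Stdlib Require Import Reals.
From mathcomp Require Import all_boot all_algebra.
Set Implicit Arguments. Unset Strict Implicit. Unset Printing Implicit Defensive.

(* Z_p is modelled by 'Z_p (for prime p, p >= 2, so 'Z_p = Z/pZ). *)
Definition rep_count (p : nat) (S : {set 'Z_p}) (n : 'Z_p) : nat :=
  #|[set x : 'Z_p * 'Z_p | (x.1 \in S) && (x.2 \in S) && (x.1 + x.2 == n)%R]|.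

(* For d in Z_p let defect d = |S \ (S + d)| and let P_i be the set
   of d with defect d <= i.  The defect is subadditive, so P_i + P_j is contained
   in P_(i+j), and Cauchy-Davenport gives |P_(kj)| >= min(p, k(|P_j| - 1) + 1).
   Since sum_(i < |S|) |P_i| = |S|^2 and |S| < 2p/5, this forces |P_i| <= 1 + 25i/8
   for 0 < i <= |S|/5.  The additive energy sum_n r(n)^2 = sum_(a,b in S)
   |S :&: (S + b - a)| is at most |S| sum_(i < |S|) min(|S|, |P_i|) <= (69/80)|S|^3
   + O(|S|^2), and Cauchy-Schwarz over T concludes because 0.93^2 > 69/80.  The
   lower bound |S| > p/3 only serves to make |S| large. *)

From Stdlib Require Import Reals Lra Psatz.
From mathcomp Require Import all_boot all_algebra zify ring.
Set Implicit Arguments. Unset Strict Implicit. Unset Printing Implicit Defensive.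
Import GRing.Theory.

Lemma leq_scale_minn k m a b : k <= m -> k * minn a (m * b) <= m * minn a (k * b).
Proof. by move=> le_km; case: (leqP a (m * b)); case: (leqP a (k * b)); nia. Qed.

Lemma sum_nat_triangular j n : j <= n ->
  2 * \sum_(j <= i < n) (i - j).+1 = (n - j) * (n - j).+1.
Proof.
elim: n => [|n IH] le_jn; first by rewrite big_geq.
have [le_jn' | ltnj] := leqP j n; last first.
  have -> : j = n.+1 by lia.
  by rewrite big_geq // subnn.
rewrite big_nat_recr //= mulnDr IH // subSn //; nia.
Qed.

Lemma sum_leq_ord n m : \sum_(i < n) (m <= i) = n - m.
Proof.
elim: n => [|n IH]; first by rewrite big_ord0.
by rewrite big_ord_recr /= IH; case: leqP => ? /=; lia.
Qed.

Lemma leq_sqr_sum (I : finType) (P : pred I) (f : I -> nat) :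
  (\sum_(i in P) f i) * (\sum_(i in P) f i) <= #|P| * \sum_(i in P) f i * f i.
Proof.
rewrite -(leq_pmul2l (isT : 0 < 2)) big_distrl /=.
have <- : \sum_(i in P) \sum_(j in P) (f i * f i + f j * f j) =
    2 * (#|P| * \sum_(i in P) f i * f i).
  under eq_bigr do rewrite big_split /= sum_nat_const.
  by rewrite big_split /= sum_nat_const -big_distrr /= mul2n -addnn.
rewrite big_distrr; apply: leq_sum => i _; rewrite big_distrr /= big_distrr.
apply: leq_sum => j _; exact: (nat_Cauchy (f i) (f j)).1.
Qed.

Section Sumset.
Variable G : finZmodType.
Implicit Types (A B : {set G}) (e : G).
Local Open Scope ring_scope.

Definition sumset A B := [set x + y | x in A, y in B].

Lemma leq_card_sumsetl A B b : b \in B -> (#|A| <= #|sumset A B|)%N.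
Proof.
move=> Bb; rewrite -(card_imset A (addIr b)); apply: subset_leq_card.
by apply/subsetP=> _ /imsetP[x Ax ->]; apply/imset2P; exists x b.
Qed.

Definition dyson_l A B e := A :|: [set y + e | y in B].
Definition dyson_r A B e := [set y in B | y + e \in A].

Lemma card_dyson A B e :
  (#|dyson_l A B e| + #|dyson_r A B e| = #|A| + #|B|)%N.
Proof.
have AIBe : A :&: [set y + e | y in B] = [set y + e | y in dyson_r A B e].
  apply/setP=> z; rewrite inE; apply/andP/imsetP.
  - by case=> Az /imsetP[y By ez]; exists y; rewrite // inE By -ez.
  - by case=> y; rewrite inE => /andP[By Aye] ->; split; last exact: imset_f.
have := cardsUI A [set y + e | y in B].
by rewrite AIBe !card_imset //; exact: addIr.
Qed.

Lemma sumset_dyson A B e : sumset (dyson_l A B e) (dyson_r A B e) \subset sumset A B.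
Proof.
apply/subsetP=> _ /imset2P[x y + + ->]; rewrite !inE => /orP[Ax | /imsetP[w Bw ->]] /andP[By Aye].
  by apply/imset2P; exists x y.
by apply/imset2P; exists (y + e) w; rewrite // addrAC [RHS]addrAC [y + w]addrC.
Qed.

End Sumset.

Section CauchyDavenport.
Variable p : nat.
Hypothesis p_pr : prime p.
Implicit Types (A B : {set 'Z_p}).
Local Open Scope ring_scope.

Lemma card_Zp_prime : #|'Z_p| = p.
Proof. by rewrite card_ord Zp_cast // prime_gt1. Qed.

Lemma Zp_prime_unit (d : 'Z_p) : d != 0 -> d \is a GRing.unit.
Proof.
have p_gt1 := prime_gt1 p_pr.
rewrite -val_eqE /= => d_neq0.
rewrite -(natr_Zp d) unitZpE // prime_coprime // gtnNdvd ?lt0n //.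
by have := ltn_ord d; rewrite [in X in (_ < X)%N -> _]Zp_cast.
Qed.

Lemma shift_invariant_setT A (d : 'Z_p) : A != set0 -> d != 0 ->
  {in A, forall a, a + d \in A} -> A = setT.
Proof.
case/set0Pn=> a0 Aa0 /Zp_prime_unit d_unit Ad.
have Aa0d k : a0 + d *+ k \in A.
  by elim: k => [|k IH]; rewrite ?mulr0n ?addr0 // mulrSr addrA Ad.
apply/setP=> x; rewrite inE.
have -> : x = a0 + d *+ val ((x - a0) / d).
  by rewrite -mulr_natr natr_Zp mulrC divrK // addrC subrK.
exact: Aa0d.
Qed.

Theorem cauchy_davenport A B : A != set0 -> B != set0 ->
  (minn p (#|A| + #|B|).-1 <= #|sumset A B|)%N.
Proof.
have [n] := ubnP #|B|; elim: n => // n IH in A B *; rewrite ltnS => leBn A0 B0.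
have [b Bb] := set0Pn _ B0.
have [leB1 | ltB1] := leqP #|B| 1.
  apply: leq_trans _ (leq_card_sumsetl A Bb); rewrite geq_min; apply/orP; right.
  by rewrite -subn1 leq_subLR addnC leq_add2r.
case: (boolP [exists a in A, exists b in B, exists y in B, y + (a - b) \notin A]).
  case/exists_inP=> a Aa /exists_inP[b1 Bb1 /exists_inP[y By Aye]].
  set e := a - b1.
  have B'0 : dyson_r A B e != set0.
    by apply/set0Pn; exists b1; rewrite inE Bb1 /e addrC subrK.
  have ltB' : (#|dyson_r A B e| < #|B|)%N.
    apply: proper_card; rewrite properE; apply/andP; split.
      by apply/subsetP=> z; rewrite inE => /andP[].
    by apply/subsetP=> /(_ y By); rewrite inE By (negbTE Aye).
  have A'0 : dyson_l A B e != set0 by apply/set0Pn; exists a; rewrite inE Aa.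
  have := IH _ _ (leq_trans ltB' leBn) A'0 B'0.
  rewrite card_dyson => /leq_trans; apply; exact: subset_leq_card (sumset_dyson A B e).
rewrite negb_exists_in => /forall_inP Ainv.
have [b2 Bb2 b2b] : exists2 b2, b2 \in B & b2 != b.
  have := cardsD1 b B; rewrite Bb => cardB.
  have [b2] : exists b2, b2 \in B :\ b by apply/set0Pn; rewrite -card_gt0; lia.
  by rewrite !inE => /andP[? ?]; exists b2.
have AT : A = setT.
  apply: (shift_invariant_setT A0 (d := b2 - b)); first by rewrite subr_eq0.
  move=> a Aa; have /exists_inPn/(_ b Bb)/exists_inPn/(_ b2 Bb2)/negPn := Ainv a Aa.
  by rewrite addrCA.
have -> : sumset A B = setT.
  apply/setP=> z; rewrite inE; apply/imset2P; exists (z - b) b => //; last by rewrite subrK.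
  by rewrite AT inE.
by rewrite cardsT card_Zp_prime geq_minl.
Qed.

End CauchyDavenport.

Section Defect.
Variables (G : finZmodType) (S : {set G}).
Local Notation s := #|S|.

Definition overlap (d : G) : nat := \sum_(x in S) ((x - d)%R \in S).
Definition defect (d : G) : nat := \sum_(x in S) ((x - d)%R \notin S).
Definition almost_periods (i : nat) : {set G} := [set d | defect d <= i].
Definition rep (n : G) : nat := \sum_(a in S) ((n - a)%R \in S).

Lemma sum_translate (F : G -> nat) a : \sum_d F (d + a)%R = \sum_d F d.
Proof. by rewrite [RHS](reindex_inj (addIr a)). Qed.

Lemma sum_reflect (F : G -> nat) a : \sum_d F (a - d)%R = \sum_d F d.
Proof. by rewrite [RHS](reindex_inj (can_inj (subKr a))). Qed.

Lemma overlap_add_defect d : overlap d + defect d = s.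
Proof.
rewrite -big_split -sum1_card; apply: eq_bigr => x _ /=.
by case: (_ \in S).
Qed.

Lemma defect0 : defect 0%R = 0.
Proof. by rewrite /defect big1 // => x Sx; rewrite subr0 Sx. Qed.

Lemma defectD d e : defect (d + e)%R <= defect d + defect e.
Proof.
rewrite /defect.
(* If [x - (d + e)] leaves [S], then either [x - e] leaves [S],
   or [x - e] is in [S] and [(x - e) - d] leaves it. *)
apply: (@leq_trans (\sum_(x in S)
  (((x - e)%R \notin S) + (((x - e)%R \in S) && ((x - e - d)%R \notin S))))).
  apply: leq_sum => x _; rewrite opprD addrA (addrAC x (- d)%R).
  by case: ((x - e)%R \in S); case: ((x - e - d)%R \in S).
rewrite big_split /= addnC leq_add2r.
apply: (@leq_trans (\sum_x (((x - e)%R \in S) && ((x - e - d)%R \notin S)) : nat)).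
  by rewrite [X in _ <= X](bigID (mem S)) leq_addr.
rewrite (sum_translate (fun x => ((x \in S) && ((x - d)%R \notin S)) : nat) (- e)%R).
by rewrite [X in _ <= X]big_mkcond; apply: leq_sum => x _; case: (x \in S).
Qed.

Lemma mem0_almost_periods i : 0%R \in almost_periods i.
Proof. by rewrite inE defect0. Qed.

Lemma almost_periods_neq0 i : almost_periods i != set0.
Proof. by apply/set0Pn; exists 0%R; apply: mem0_almost_periods. Qed.

Lemma subset_almost_periods i j : i <= j -> almost_periods i \subset almost_periods j.
Proof. by move=> le_ij; apply/subsetP=> d; rewrite !inE => /leq_trans; apply. Qed.

Lemma sumset_almost_periods i j :
  sumset (almost_periods i) (almost_periods j) \subset almost_periods (i + j).
Proof.
apply/subsetP=> _ /imset2P[d e + + ->]; rewrite !inE => Ad Ae.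
exact: leq_trans (defectD d e) (leq_add Ad Ae).
Qed.

Lemma card_almost_periodsE i : #|almost_periods i| = \sum_d (defect d <= i).
Proof. by rewrite -sum1dep_card big_mkcond. Qed.

Lemma sum_card_almost_periods : \sum_(i < s) #|almost_periods i| = s * s.
Proof.
under eq_bigr do rewrite card_almost_periodsE.
rewrite exchange_big /=.
under eq_bigr => d _ do rewrite sum_leq_ord -(overlap_add_defect d) addnK.
rewrite /overlap exchange_big /= -sum_nat_const; apply: eq_bigr => x _.
by rewrite (sum_reflect (fun d => (d \in S) : nat) x) -big_mkcond sum1_card.
Qed.

Lemma sum_card_almost_periods_from j : \sum_(j <= i < s) #|almost_periods i| <= s * s.
Proof.
have [lt_sj | le_js] := ltnP s j; first by rewrite big_geq // ltnW.
rewrite -sum_card_almost_periods -(big_mkord xpredT (fun i => #|almost_periods i|)).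
rewrite (big_cat_nat (leq0n j) le_js).
exact: leq_addl.
Qed.

Lemma sum_overlap_le a :
  \sum_(b in S) overlap (b - a)%R <= \sum_(i < s) minn s #|almost_periods i|.
Proof.
rewrite (eq_bigr (fun b => \sum_(i < s) (defect (b - a)%R <= i))); last first.
  by move=> b _; rewrite sum_leq_ord -(overlap_add_defect (b - a)%R) addnK.
rewrite exchange_big /=; apply: leq_sum => i _; rewrite leq_min; apply/andP; split.
  apply: (@leq_trans (\sum_(b in S) 1)); last by rewrite sum1_card.
  by apply: leq_sum => b _; apply: leq_b1.
rewrite (card_almost_periodsE i) -(sum_translate _ (- a)%R).
by rewrite [X in _ <= X](bigID (mem S)) leq_addr.
Qed.

Lemma sum_rep_sqr : \sum_n rep n * rep n <= s * \sum_(i < s) minn s #|almost_periods i|.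
Proof.
have rep_sqrE n : rep n * rep n =
    \sum_(a in S) \sum_(b in S) (((n - a)%R \in S) * ((n - b)%R \in S)).
  by rewrite /rep big_distrl; apply: eq_bigr => a _; rewrite big_distrr.
have sum_repE a b : \sum_n (((n - a)%R \in S) * ((n - b)%R \in S)) = overlap (b - a)%R.
  rewrite -(sum_translate _ a) /overlap [RHS]big_mkcond; apply: eq_bigr => x _.
  rewrite addrK -[(x + a - b)%R]addrA -opprB.
  by case: (x \in S); rewrite ?mul0n ?mul1n.
under eq_bigr do rewrite rep_sqrE.
rewrite exchange_big /= -sum_nat_const; apply: leq_sum => a _.
rewrite exchange_big /=; under eq_bigr do rewrite sum_repE.
exact: sum_overlap_le.
Qed.

End Defect.

Section AlmostPeriodsZp.
Variables (p : nat) (S : {set 'Z_p}).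
Hypothesis p_pr : prime p.
Local Notation s := #|S|.
Local Notation N i := #|almost_periods S i|.

Lemma card_almost_periods_mul j k : minn p (k * (N j - 1) + 1) <= N (k * j).
Proof.
elim: k => [|k IH]; first by rewrite mul0n geq_min card_gt0 almost_periods_neq0 orbT.
have CD := cauchy_davenport p_pr (almost_periods_neq0 S (k * j)) (almost_periods_neq0 S j).
have := subset_leq_card (sumset_almost_periods S (k * j) j).
have := card_gt0 (almost_periods S j); rewrite almost_periods_neq0 !mulSnr.
rewrite -subn1 in CD; move: CD IH.
(* [set] identifies the cardinals elaborated through the generic and the 'Z_p
   instances, which [lia] would treat as different atoms. *)
set a := N (k * j); set b := N j; set d := N (k * j + j); lia.
Qed.

Lemma card_almost_periods_ge j i : 0 < j -> j <= i ->
  minn (j * p) ((i - j).+1 * (N j - 1)) <= j * N i.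
Proof.
move=> j_gt0 le_ji; set q := i %/ j.
have le_iq : (i - j).+1 <= q * j.
  by have := divn_eq i j; have := ltn_pmod i j_gt0; rewrite -/q; lia.
have := card_almost_periods_mul j q.
have := subset_leq_card (subset_almost_periods S (leq_divM i j)); rewrite -/q.
case: (leqP p (q * (N j - 1) + 1)); case: (leqP (j * p) ((i - j).+1 * (N j - 1))); nia.
Qed.

Lemma card_almost_periods_level j : 0 < j -> j < s -> 5 * j <= s + 5 -> 5 * s < 2 * p ->
  (s - j) * (s - j).+1 * (N j - 1) <= 2 * j * (s * s).
Proof.
move=> j_gt0 lt_js le_5j lt_sp.
set m := s - j; set c := N j - 1; set M := minn (j * p) (m * c).
have tail : \sum_(j <= i < s) N i <= s * s := sum_card_almost_periods_from S j.
have termwise i : j <= i < s -> (i - j).+1 * M <= m * (j * N i).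
  case/andP=> le_ji lt_is.
  have le_im : (i - j).+1 <= m by rewrite /m; lia.
  apply: leq_trans (leq_scale_minn _ _ le_im) _.
  by rewrite leq_mul2l card_almost_periods_ge ?orbT.
have sumM : (\sum_(j <= i < s) (i - j).+1) * M <= m * (j * (s * s)).
  apply: (@leq_trans (\sum_(j <= i < s) m * (j * N i))).
    rewrite big_distrl /= big_nat_cond [X in _ <= X]big_nat_cond.
    by apply: leq_sum => i /andP[+ _]; exact: termwise.
  by rewrite -!big_distrr /= !leq_mul2l tail !orbT.
have m_gt0 : 0 < m by rewrite /m subn_gt0.
have {sumM} : m.+1 * M <= 2 * j * (s * s).
  rewrite -(leq_pmul2l m_gt0) mulnA -(sum_nat_triangular (ltnW lt_js)) -/m.
  have -> : m * (2 * j * (s * s)) = 2 * (m * (j * (s * s))) by ring.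
  by rewrite -mulnA leq_mul2l sumM orbT.
rewrite /M; case: (leqP (j * p) (m * c)) => _; last by rewrite mulnA (mulnC m.+1).
(* The minimum cannot be [j * p]:
   [s - j + 1 >= 4s/5] and [p > 5s/2] give [(s - j + 1) p > 2 s^2]. *)
have -> : m.+1 * (j * p) = j * (m.+1 * p) by ring.
have -> : 2 * j * (s * s) = j * (2 * (s * s)) by ring.
rewrite leq_pmul2l // => le_ps; exfalso; move: le_ps; apply/negP; rewrite -ltnNge.
have le_4s : 4 * s <= 5 * m.+1 by rewrite /m; lia.
have := leq_mul le_4s lt_sp; nia.
Qed.

Lemma card_almost_periods_small i : 0 < i -> 5 * i <= s -> 5 * s < 2 * p ->
  8 * N i <= 8 + 25 * i.
Proof.
move=> i_gt0 le_5i lt_sp.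
have := card_almost_periods_level i_gt0 (ltac:(lia) : i < s) (ltac:(lia)) lt_sp.
have le_D : 16 * (s * s) <= 25 * ((s - i) * (s - i).+1).
  have le_4s : 4 * s <= 5 * (s - i) by lia.
  have := leq_mul le_4s le_4s; nia.
set D := (s - i) * _; set c := N i - 1 => le_Dc.
have : 16 * c * (s * s) <= 50 * i * (s * s).
  have := leq_mul le_D (leqnn c); have := leq_mul (leqnn 25) le_Dc; nia.
rewrite leq_pmul2r; first by rewrite /c; lia.
by rewrite muln_gt0 andbb; lia.
Qed.

Lemma sum_minn_card_almost_periods : 5 * s < 2 * p ->
  80 * \sum_(i < s) minn s (N i) <= 69 * (s * s) + 109 * s.
Proof.
move=> lt_sp; set J := s %/ 5.
(* Below [s/5] use the linear bound on [N i], above it the trivial bound [s]. *)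
have le_5J : 5 * J <= s by rewrite mulnC leq_divM.
have le_s5J : s <= 5 * J + 4.
  by have := divn_eq s 5; have := ltn_pmod s (isT : 0 < 5); rewrite -/J; lia.
have small i : i < J -> 16 * minn s (N i) <= 16 + 50 * i.+1.
  move=> lt_iJ; apply: leq_trans (leq_mul (leqnn 16) (geq_minr _ _)) _.
  have := card_almost_periods_small (ltn0Sn 0) (ltac:(lia) : 5 * 1 <= s) lt_sp.
  have := subset_leq_card (subset_almost_periods S (leq0n 1)).
  case: i lt_iJ => [|i] lt_iJ; first by lia.
  have := card_almost_periods_small (ltn0Sn i) (ltac:(lia) : 5 * i.+1 <= s) lt_sp; lia.
have low : 16 * \sum_(0 <= i < J) minn s (N i) <= 16 * J + 25 * (J * J.+1).
  apply: (@leq_trans (\sum_(0 <= i < J) (16 + 50 * i.+1))).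
    rewrite big_distrr /= big_nat_cond [X in _ <= X]big_nat_cond.
    by apply: leq_sum => i /andP[/andP[_ lt_iJ] _]; exact: small.
  rewrite big_split /= sum_nat_const_nat -big_distrr /=.
  have <- : \sum_(0 <= i < J) (i - 0).+1 = \sum_(0 <= i < J) i.+1.
    by apply: eq_bigr => i _; rewrite subn0.
  have := sum_nat_triangular (leq0n J); rewrite !subn0; lia.
have high : \sum_(J <= i < s) minn s (N i) <= (s - J) * s.
  by rewrite -sum_nat_const_nat; apply: leq_sum => i _; exact: geq_minl.
rewrite -(big_mkord xpredT (fun i => minn s (N i))).
rewrite (big_cat_nat (leq0n J) (leq_trans (leq_pmull _ _) le_5J)) //= mulnDr.
have sqJ : 25 * (J * J) <= s * s by rewrite -[25]/(5 * 5) mulnACA leq_mul.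
have sqs : s * s <= 5 * (J * s) + 4 * s by rewrite mulnA -mulnDl leq_mul2r le_s5J orbT.
move: low high; rewrite mulnBl mulnS.
set lo := \sum_(0 <= i < J) _; set hi := \sum_(J <= i < s) _.
move: sqJ sqs le_5J; set JJ := J * J; set Js := J * s; set ss := s * s.
clearbody lo hi JJ Js ss; set n := #|S|; lia.
Qed.

End AlmostPeriodsZp.

Lemma rep_countE p (S : {set 'Z_p}) n : rep_count S n = rep S n.
Proof.
rewrite /rep_count -sum1dep_card big_mkcond /= -(pair_bigA _ (fun a b =>
  if (a \in S) && (b \in S) && (a + b == n)%R then 1 else 0)) /=.
rewrite /rep [RHS]big_mkcond /=; apply: eq_bigr => a _.
rewrite (bigD1 (n - a)%R) //= big1 => [|b ne_b]; last first.
  by rewrite addrC eq_sym -subr_eq eq_sym (negbTE ne_b) andbF.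
by rewrite addn0 [(a + _)%R]addrC subrK eqxx andbT; case: (a \in S).
Qed.

Lemma sqr_sum_rep_count p (S T : {set 'Z_p}) : prime p -> 5 * #|S| < 2 * p ->
  80 * ((\sum_(n in T) rep_count S n) * (\sum_(n in T) rep_count S n))
    <= #|T| * #|S| * (69 * (#|S| * #|S|) + 109 * #|S|).
Proof.
move=> p_pr lt_sp; under eq_bigr do rewrite rep_countE.
have energy : \sum_(n in T) rep S n * rep S n <=
    #|S| * \sum_(i < #|S|) minn #|S| #|almost_periods S i|.
  apply: leq_trans (sum_rep_sqr S); rewrite [X in _ <= X](bigID (mem T)) /=.
  exact: leq_addr.
apply: leq_trans (leq_mul (leqnn 80) (leq_sqr_sum _ _)) _.
apply: leq_trans (leq_mul (leqnn 80) (leq_mul (leqnn #|T|) energy)) _.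
have := sum_minn_card_almost_periods p_pr lt_sp.
set Q := \sum_(i < _) _ => le_Q.
have -> : 80 * (#|T| * (#|S| * Q)) = #|T| * #|S| * (80 * Q) by ring.
by rewrite leq_mul2l le_Q orbT.
Qed.

Section RealBound.
Local Open Scope R_scope.

Lemma INR_lt_93_sqrt (N s t : nat) : (568 <= s)%N -> (0 < t)%N ->
  (80 * (N * N) <= t * s * (69 * (s * s) + 109 * s))%N ->
  INR N < INR 93 / INR 100 * INR s * sqrt (INR s * INR t).
Proof.
move=> /leP/le_INR + /leP/le_INR + /leP/le_INR.
rewrite -!multE -!plusE !mult_INR plus_INR !mult_INR.
have [-> -> ->] : [/\ INR 568 = 568, INR 80 = 80 & INR 69 = 69].
  by split; rewrite INR_IZR_INZ.
have [-> -> ->] : [/\ INR 109 = 109, INR 93 = 93 & INR 100 = 100].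
  by split; rewrite INR_IZR_INZ.
rewrite [INR 1]/=; have := pos_INR N.
set x := INR N; set y := INR s; set z := INR t => x_ge0 le_s le_t le_x.
set q := sqrt (y * z).
have q_ge0 : 0 <= q by apply: sqrt_pos.
have qq : q * q = y * z by apply: sqrt_sqrt; nra.
apply: Rnot_le_lt => le_qx.
have c_ge0 : 0 <= 93 / 100 * y * q by apply: Rmult_le_pos; lra.
have := Rmult_le_compat _ _ _ _ c_ge0 c_ge0 le_qx le_qx.
have -> : 93 / 100 * y * q * (93 / 100 * y * q) = 8649 / 10000 * (y * y) * (y * z).
  by rewrite -qq; lra.
nra.
Qed.

Lemma INR_density_bounds (p s : nat) :
  INR p / INR 3 < INR s -> INR s < INR 2 * INR p / INR 5 ->
  (p < 3 * s)%N /\ (5 * s < 2 * p)%N.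
Proof.
move=> lt_ps lt_sp.
suff [lt_p3s lt_5sp] : INR p < INR 3 * INR s /\ INR 5 * INR s < INR 2 * INR p.
  by split; apply/ltP; apply: INR_lt; rewrite !mult_INR.
move: lt_ps lt_sp.
have [-> -> ->] : [/\ INR 2 = 2, INR 3 = 3 & INR 5 = 5] by split; rewrite INR_IZR_INZ.
by split; lra.
Qed.

End RealBound.

Theorem lemma4 : exists p0 : nat, forall p : nat, prime p -> (p0 < p)%N ->
  forall S : {set 'Z_p},
    Rlt (Rdiv (INR p) (INR 3)) (INR #|S|) ->
    Rlt (INR #|S|) (Rdiv (Rmult (INR 2) (INR p)) (INR 5)) ->
    forall T : {set 'Z_p}, T != set0 ->
      Rlt (INR (\sum_(n in T) rep_count S n)%N)
          (Rmult (Rmult (Rdiv (INR 93) (INR 100)) (INR #|S|))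
                 (sqrt (Rmult (INR #|S|) (INR #|T|)))).
Proof.
exists 1704 => p p_pr lt_p S lt_pS lt_Sp T T_neq0.
have [lt_p3S lt_5Sp] := INR_density_bounds lt_pS lt_Sp.
apply: INR_lt_93_sqrt; first by lia.
  by rewrite card_gt0.
exact: sqr_sum_rep_count.
Qed.
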